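(* Let $a=\{a_k\}_{k=0}^\infty$ be a log-convex sequence with $1=a_0>a_1\geq a_2\geq\cdots$, $\lim_{k\to\infty}a_k=0$ and $\sum_{k=0}^\infty a_k=\infty$. Define $\{b_k\}_{k=0}^\infty$ by $b_0=1/a_0$ and $b_k=-\frac{1}{a_0}\sum_{j=0}^{k-1}a_{k-j}b_j$ for $k\geq1$ (the entries of the inverse of the half-infinite lower triangular Toeplitz matrix $A$ with $A_{ij}=a_{i-j}$ for $i\geq j$). Then $\sum_{k=0}^\infty|b_k|=2$; in particular the inverse matrix has summable entries.
   Context: A sequence $\{a_k\}_{k\ge0}$ is log-convex if $a_k\geq0$ for all $k$ and $a_k^2\leq a_{k-1}a_{k+1}$ for all $k\geq1$. *)

From Stdlib Require Import Reals.
From Coquelicot Require Import Coquelicot.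
Open Scope R_scope.

Definition log_convex (a : nat -> R) : Prop :=
  (forall k, 0 <= a k) /\ (forall k, (1 <= k)%nat -> (a k)^2 <= a (k - 1)%nat * a (k + 1)%nat).

(** Let [B n] be the partial sums of [b] and [A n] those of [a].  Kaluza's
    theorem gives [b k <= 0] for [k >= 1], so [sum_{k<=n} |b k| = 2 - B n] and
    it suffices that [B n -> 0].  Convolving the identity [a * b = 1] with the
    constant sequence [1] gives [sum_j b j A (n - j) = 1]; as [A] increases and
    [b j <= 0] for [j >= 1], this yields [A n B n <= 1].  Conversely
    [0 = sum_j a (n - j) b j >= a n B n] because [a] decreases, so [B n >= 0].
    Since [A n -> +oo], [B n] is squeezed to [0]. *)

From Stdlib Require Import Reals Lra Lia Psatz.
From Coquelicot Require Import Coquelicot.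
Open Scope R_scope.

Lemma partial_sum_le_shift (a : nat -> R) (m d : nat) :
  (forall k, 0 <= a k) -> sum_f_R0 a m <= sum_f_R0 a (m + d).
Proof.
  intros Hnn; induction d as [|d IH].
  - rewrite Nat.add_0_r; lra.
  - rewrite Nat.add_succ_r, tech5; specialize (Hnn (S (m + d))); lra.
Qed.

Lemma decreasing_divergent_pos (a : nat -> R) :
  (forall k, 0 <= a k) -> Un_decreasing a ->
  is_lim_seq (sum_f_R0 a) p_infty -> forall k, 0 < a k.
Proof.
  intros Hnn Hdec Hdiv k.
  destruct (Rle_lt_dec (a k) 0) as [Hk|Hk]; [exfalso|exact Hk].
  assert (Htail : forall d, sum_f_R0 a (k + d) = sum_f_R0 a k).
  { induction d as [|d IH]; [now rewrite Nat.add_0_r|].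
    rewrite Nat.add_succ_r, tech5, IH.
    pose proof (decreasing_prop a k (S (k + d)) Hdec ltac:(lia)).
    specialize (Hnn (S (k + d))); lra. }
  assert (Hbound : forall n, sum_f_R0 a n <= sum_f_R0 a k).
  { intro n; rewrite <- (Htail n), Nat.add_comm; now apply partial_sum_le_shift. }
  exact (is_lim_seq_le _ _ _ _ Hbound Hdiv (is_lim_seq_const _)).
Qed.

Section LogConvex.

Variable a : nat -> R.
Hypothesis a_pos : forall k, 0 < a k.
Hypothesis a_log_convex : forall k, a (S k) ^ 2 <= a k * a (S (S k)).

Lemma log_convex_ratio_mono (p q : nat) :
  (p <= q)%nat -> a (S p) * a q <= a p * a (S q).
Proof.
  intros Hpq; replace q with (p + (q - p))%nat by lia.
  generalize (q - p)%nat; intro d; induction d as [|d IH].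
  - rewrite Nat.add_0_r; lra.
  - rewrite Nat.add_succ_r.
    pose proof (a_log_convex (p + d)) as L.
    pose proof (a_pos p); pose proof (a_pos (S p)).
    pose proof (a_pos (p + d)); pose proof (a_pos (S (p + d))).
    pose proof (a_pos (S (S (p + d)))).
    set (x := a p) in *; set (y := a (S p)) in *; set (u := a (p + d)%nat) in *.
    set (v := a (S (p + d))) in *; set (w := a (S (S (p + d)))) in *.
    apply Rmult_le_reg_l with (u * v); [nra|].
    apply Rle_trans with ((x * v) * v ^ 2); [nra|].
    replace (u * v * (x * w)) with ((x * v) * (u * w)) by ring.
    apply Rmult_le_compat_l; [nra|lra].
Qed.

End LogConvex.

Section ConvolutionInverse.

Variables a b : nat -> R.
Hypothesis a0 : a 0%nat = 1.
Hypothesis b0 : b 0%nat = 1.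
Hypothesis conv_inverse :
  forall n, sum_f_R0 (fun j => a (S n - j)%nat * b j) (S n) = 0.

Lemma conv_inverse_succ (n : nat) :
  b (S n) = - sum_f_R0 (fun j => a (S n - j)%nat * b j) n.
Proof.
  pose proof (conv_inverse n) as H.
  rewrite tech5, Nat.sub_diag, a0 in H; lra.
Qed.

(* [a (S (S m))] times the convolution equation of order [S m] minus [a (S m)]
   times that of order [S (S m)]: every coefficient of [b j], [j <= S m], is a
   gap of [log_convex_ratio_mono], which is how Kaluza's induction proceeds. *)
Lemma conv_inverse_ratio_identity (m : nat) :
  a (S m) * b (S (S m)) =
  sum_f_R0 (fun j => b j * (a (S (S m)) * a (S m - j)%nat
                            - a (S m) * a (S (S m) - j)%nat)) (S m).
Proof.
  rewrite (sum_eq _ (fun j => a (S m - j)%nat * b j * a (S (S m))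
                            - a (S (S m) - j)%nat * b j * a (S m)))
    by (intros; ring).
  rewrite minus_sum, <- !scal_sum, conv_inverse, conv_inverse_succ; ring.
Qed.

Section Kaluza.

Hypothesis a_pos : forall k, 0 < a k.
Hypothesis a_log_convex : forall k, a (S k) ^ 2 <= a k * a (S (S k)).

Lemma kaluza_step (m : nat) :
  (forall i, (i <= m)%nat -> b (S i) <= 0) -> b (S (S m)) <= 0.
Proof.
  intros IH.
  assert (Hterms :
    sum_f_R0 (fun j => b j * (a (S (S m)) * a (S m - j)%nat
                              - a (S m) * a (S (S m) - j)%nat)) (S m)
    <= sum_f_R0 (fun _ => 0) (S m)).
  { apply sum_Rle; intros [|i] Hi.
    - rewrite b0, !Nat.sub_0_r; lra.
    - pose proof (IH i ltac:(lia)).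
      pose proof (log_convex_ratio_mono a a_pos a_log_convex
                    (S m - S i) (S m) ltac:(lia)).
      replace (S (S m) - S i)%nat with (S (S m - S i)) by lia.
      nra. }
  rewrite sum_cte, Rmult_0_l, <- conv_inverse_ratio_identity in Hterms.
  pose proof (a_pos (S m)); nra.
Qed.

Theorem kaluza (n : nat) : b (S n) <= 0.
Proof.
  assert (Hupto : forall m i, (i <= m)%nat -> b (S i) <= 0).
  { induction m as [|m IH]; intros i Hi.
    - replace i with 0%nat by lia.
      rewrite conv_inverse_succ; simpl; rewrite b0.
      pose proof (a_pos 1); lra.
    - destruct (Nat.eq_dec i (S m)) as [->|Hne]; [|apply IH; lia].
      now apply kaluza_step. }
  exact (Hupto n n (le_n n)).
Qed.

End Kaluza.

Lemma conv_inverse_partial_sums (n : nat) :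
  sum_f_R0 (fun j => b j * sum_f_R0 a (n - j)%nat) n = 1.
Proof.
  induction n as [|n IH].
  - simpl; rewrite a0, b0; ring.
  - rewrite tech5, Nat.sub_diag.
    rewrite (sum_eq _ (fun j => b j * sum_f_R0 a (n - j)%nat
                                + a (S n - j)%nat * b j)).
    + rewrite sum_plus, IH.
      pose proof (conv_inverse_succ n); change (sum_f_R0 a 0) with (a 0%nat).
      rewrite a0; lra.
    + intros i Hi; replace (S n - i)%nat with (S (n - i)) by lia.
      rewrite tech5; ring.
Qed.

Section PartialSums.

Hypothesis a_nonneg : forall k, 0 <= a k.
Hypothesis b_succ_nonpos : forall n, b (S n) <= 0.

Lemma partial_sums_mul_le_1 (n : nat) :
  sum_f_R0 a n * sum_f_R0 b n <= 1.
Proof.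
  rewrite <- (conv_inverse_partial_sums n), scal_sum.
  apply sum_Rle; intros [|i] Hi.
  - rewrite Nat.sub_0_r; lra.
  - pose proof (b_succ_nonpos i).
    pose proof (partial_sum_le_shift a (n - S i) (S i) a_nonneg).
    replace (n - S i + S i)%nat with n in * by lia.
    nra.
Qed.

Lemma partial_sum_nonneg (n : nat) :
  Un_decreasing a -> (forall k, 0 < a k) -> 0 <= sum_f_R0 b n.
Proof.
  intros Hdec Hpos; destruct n as [|n]; [simpl; lra|].
  assert (Hs : sum_f_R0 (fun j => a (S n - j)%nat * b j) (S n)
               <= a (S n) * sum_f_R0 b (S n)).
  { rewrite scal_sum; apply sum_Rle; intros [|i] Hi.
    - rewrite Nat.sub_0_r; lra.
    - pose proof (b_succ_nonpos i).
      pose proof (decreasing_prop a (S n - S i) (S n) Hdec ltac:(lia)).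
      nra. }
  rewrite conv_inverse in Hs; pose proof (Hpos (S n)); nra.
Qed.

Lemma sum_abs_conv_inverse (n : nat) :
  sum_f_R0 (fun k => Rabs (b k)) n = 2 - sum_f_R0 b n.
Proof.
  induction n as [|n IH].
  - simpl; rewrite b0, Rabs_R1; lra.
  - rewrite !tech5, IH, Rabs_left1 by apply b_succ_nonpos; lra.
Qed.

Lemma partial_sum_cvg_0 :
  Un_decreasing a -> is_lim_seq (sum_f_R0 a) p_infty ->
  is_lim_seq (sum_f_R0 b) 0.
Proof.
  intros Hdec Hdiv.
  pose proof (decreasing_divergent_pos a a_nonneg Hdec Hdiv) as Hpos.
  apply is_lim_seq_le_le with (u := fun _ => 0) (w := fun n => / sum_f_R0 a n).
  - intro n; split; [now apply partial_sum_nonneg|].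
    assert (HA : 0 < sum_f_R0 a n).
    { pose proof (partial_sum_le_shift a 0 n a_nonneg); simpl in *; lra. }
    apply Rmult_le_reg_l with (sum_f_R0 a n); [exact HA|].
    rewrite Rinv_r by lra; apply partial_sums_mul_le_1.
  - apply is_lim_seq_const.
  - change (Finite 0) with (Rbar_inv p_infty).
    apply is_lim_seq_inv; [exact Hdiv|discriminate].
Qed.

Lemma is_series_abs_conv_inverse :
  Un_decreasing a -> is_lim_seq (sum_f_R0 a) p_infty ->
  is_series (fun k => Rabs (b k)) 2.
Proof.
  intros Hdec Hdiv.
  change (is_lim_seq (sum_n (fun k => Rabs (b k))) 2).
  apply (is_lim_seq_ext (fun n => 2 - sum_f_R0 b n)).
  - intro n; now rewrite sum_n_Reals, sum_abs_conv_inverse.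
  - replace (Finite 2) with (Rbar_minus 2 0) by (simpl; f_equal; ring).
    apply is_lim_seq_minus'; [apply is_lim_seq_const|].
    now apply partial_sum_cvg_0.
Qed.

End PartialSums.

End ConvolutionInverse.

Lemma log_convex_succ (a : nat -> R) :
  log_convex a -> forall k, a (S k) ^ 2 <= a k * a (S (S k)).
Proof.
  intros [_ Hlc] k; pose proof (Hlc (S k) ltac:(lia)) as L.
  now replace (S k - 1)%nat with k in L by lia; rewrite Nat.add_1_r in L.
Qed.

Lemma toeplitz_recursion_conv_inverse (a b : nat -> R) :
  a 0%nat = 1 ->
  (forall k, (1 <= k)%nat ->
     b k = - (1 / a 0%nat) * sum_n (fun j => a (k - j)%nat * b j) (k - 1)%nat) ->
  forall n, sum_f_R0 (fun j => a (S n - j)%nat * b j) (S n) = 0.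
Proof.
  intros Ha0 Hrec n.
  rewrite tech5, Nat.sub_diag, Ha0, (Hrec (S n)), Ha0, sum_n_Reals by lia.
  replace (S n - 1)%nat with n by lia; field.
Qed.

Theorem theorem5 (a b : nat -> R) :
  log_convex a ->
  a 0%nat = 1 ->
  a 0%nat > a 1%nat ->
  (forall k, (1 <= k)%nat -> a k >= a (S k)) ->
  is_lim_seq a 0 ->
  is_lim_seq (sum_n a) p_infty ->
  b 0%nat = 1 / a 0%nat ->
  (forall k, (1 <= k)%nat ->
     b k = - (1 / a 0%nat) * sum_n (fun j => a (k - j)%nat * b j) (k - 1)%nat) ->
  is_series (fun k => Rabs (b k)) 2.
Proof.
  intros Hlog Ha0 Ha01 Hdec _ Hdiv Hb0 Hrec.
  assert (Hb0' : b 0%nat = 1) by (rewrite Hb0, Ha0; field).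
  pose proof (toeplitz_recursion_conv_inverse a b Ha0 Hrec) as Hconv.
  assert (Hdec' : Un_decreasing a).
  { intros [|k]; [lra|]; apply Rge_le, Hdec; lia. }
  assert (Hdiv' : is_lim_seq (sum_f_R0 a) p_infty).
  { eapply is_lim_seq_ext; [|exact Hdiv]; intro; apply sum_n_Reals. }
  pose proof (proj1 Hlog) as Hnn.
  pose proof (decreasing_divergent_pos a Hnn Hdec' Hdiv') as Hpos.
  pose proof (kaluza a b Ha0 Hb0' Hconv Hpos (log_convex_succ a Hlog)) as Hneg.
  exact (is_series_abs_conv_inverse a b Ha0 Hb0' Hconv Hnn Hneg Hdec' Hdiv').
Qed.
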